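(* Let $X$ and $C$ be random variables with joint distribution $p(X,C)$ on finite support $\mathcal X\times\mathcal C$. For $x\in\mathcal X$ let $\mathbf x=[p(c,x)]_{c\in\mathcal C}\in[0,1]^{|\mathcal C|}$. For $x\ne y$ in $\mathcal X$ let $\pi_{x,y}:\mathcal X\to(\mathcal X\setminus\{x,y\})\cup\{z\}$ ($z\notin\mathcal X$ a new symbol) be the identity on $\mathcal X\setminus\{x,y\}$ and send $x,y$ to $z$, and let $\mathrm{MIL}(\mathbf x,\mathbf y)=I(X;C)-I(\pi_{x,y}(X);C)$. Then $$\mathrm{MIL}(\mathbf x,\mathbf y)=K_1(\mathbf x,\mathbf y)-K_2(\mathbf x,\mathbf y),$$ where $K_1(\mathbf x,\mathbf y)=k\big(\sum_{c\in\mathcal C}p(c,x),\sum_{c\in\mathcal C}p(c,y)\big)$ and $K_2(\mathbf x,\mathbf y)=\sum_{c\in\mathcal C}k(p(c,x),p(c,y))$, and $K_1$, $K_2$ are positive definite kernels on $[0,1]^{|\mathcal C|}$. Hence $\mathrm{MIL}$ is a Kreĭn kernel on $[0,1]^{|\mathcal C|}$.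
   Context: $k(a,b)=a\ln\frac{a+b}{a}+b\ln\frac{a+b}{b}=\eta(a)+\eta(b)-\eta(a+b)$ with $\eta(u)=-u\ln u$, $0\ln0=0$. $I(\cdot;\cdot)$ is mutual information. A symmetric real map $k$ on $\mathcal X\times\mathcal X$ is a positive definite kernel if $\sum_{i,j}a_ia_jk(x_i,x_j)\ge0$ for all finite choices of reals $a_i$ and points $x_i$; it is a Kreĭn kernel if it equals $k_1-k_2$ for two positive definite kernels $k_1,k_2$. *)

From Stdlib Require Import Reals Lra Lia.
Open Scope R_scope.

Fixpoint fsum (n : nat) (f : nat -> R) : R :=
  match n with
  | O => 0
  | S n' => fsum n' f + f n'
  end.

Definition eta (u : R) : R :=
  if Req_EM_T u 0 then 0 else - u * ln u.

Definition kfun (a b : R) : R := eta a + eta b - eta (a + b).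

Definition marg1 (M : nat) (P : nat -> nat -> R) (u : nat) : R :=
  fsum M (fun c => P u c).
Definition marg2 (N : nat) (P : nat -> nat -> R) (c : nat) : R :=
  fsum N (fun u => P u c).
Definition mutual_info (N M : nat) (P : nat -> nat -> R) : R :=
  fsum N (fun u => fsum M (fun c =>
    if Req_EM_T (P u c) 0 then 0
    else P u c * ln (P u c / (marg1 M P u * marg2 N P c)))).

Definition is_joint_pmf (n m : nat) (p : nat -> nat -> R) : Prop :=
  (forall x c, (x < n)%nat -> (c < m)%nat -> 0 <= p x c) /\
  fsum n (fun x => fsum m (fun c => p x c)) = 1.

(* pi_{x,y} : X -> (X \ {x,y}) u {z}, with the new symbol z encoded as n
   (not in X = {0..n-1}); identity elsewhere. *)
Definition merge_map (n x y : nat) (w : nat) : nat :=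
  if Nat.eqb w x then n else if Nat.eqb w y then n else w.

Definition pushforward (n x y : nat) (p : nat -> nat -> R) (u c : nat) : R :=
  fsum n (fun w => if Nat.eqb (merge_map n x y w) u then p w c else 0).

Definition MIL (n m : nat) (p : nat -> nat -> R) (x y : nat) : R :=
  mutual_info n m p - mutual_info (S n) m (pushforward n x y p).

(* Points of R^m are functions nat -> R (coordinates c < m). *)
Definition vec := nat -> R.

Definition in_unit_cube (m : nat) (v : vec) : Prop :=
  forall c, (c < m)%nat -> 0 <= v c <= 1.

Definition K1 (m : nat) (u v : vec) : R := kfun (fsum m u) (fsum m v).
Definition K2 (m : nat) (u v : vec) : R := fsum m (fun c => kfun (u c) (v c)).

Definition pos_def_kernel (D : vec -> Prop) (K : vec -> vec -> R) : Prop :=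
  (forall u v, D u -> D v -> K u v = K v u) /\
  (forall (N : nat) (a : nat -> R) (pts : nat -> vec),
     (forall i, (i < N)%nat -> D (pts i)) ->
     0 <= fsum N (fun i => fsum N (fun j => a i * a j * K (pts i) (pts j)))).

Definition krein_kernel (D : vec -> Prop) (K : vec -> vec -> R) : Prop :=
  exists K1' K2', pos_def_kernel D K1' /\ pos_def_kernel D K2' /\
    forall u v, D u -> D v -> K u v = K1' u v - K2' u v.

(** The identity for MIL is bookkeeping: writing [I(U;C)] as
    [sum xlnx P - sum xlnx (row marginals) - sum xlnx (column marginals)],
    merging the rows [x] and [y] only changes the terms of those two rows,
    and the change is exactly [K1 - K2].

    Positive definiteness of [k] on [[0, oo)] comes from the integral
    representations
    [k(a,b) = int_0^oo M_s(a,b) ds] and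
    [M_s(a,b) = s int_0^oo e^(-rs) (1 - e^(-ra)) (1 - e^(-rb)) dr],
    where [M_s(a,b) = a/(s+a) + b/(s+b) - (a+b)/(s+a+b)]: the inner integrand
    is a nonnegative multiple of a rank-one kernel.  Integrals are avoided by
    applying the mean value theorem to the tails of both integrals, viewed
    as functions of the lower bound: their quadratic forms are nonincreasing
    and decay like [1/r], hence are nonnegative at [0]. *)

From Stdlib Require Import Reals Lra Lia.
From Coquelicot Require Import Coquelicot.
Open Scope R_scope.

Lemma fsum_ext n f g :
  (forall i, (i < n)%nat -> f i = g i) -> fsum n f = fsum n g.
Proof.
  induction n as [|n IH]; simpl; intros H; auto.
  rewrite IH by (intros; apply H; lia). now rewrite H by lia.
Qed.

Lemma fsum_zero n : fsum n (fun _ => 0) = 0.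
Proof. induction n; simpl; lra. Qed.

Lemma fsum_plus n f g : fsum n (fun i => f i + g i) = fsum n f + fsum n g.
Proof. induction n; simpl; [lra|]. rewrite IHn; lra. Qed.

Lemma fsum_minus n f g : fsum n (fun i => f i - g i) = fsum n f - fsum n g.
Proof. induction n; simpl; [lra|]. rewrite IHn; lra. Qed.

Lemma fsum_scal n c f : fsum n (fun i => c * f i) = c * fsum n f.
Proof. induction n; simpl; [lra|]. rewrite IHn; lra. Qed.

Lemma fsum_opp n f : fsum n (fun i => - f i) = - fsum n f.
Proof. induction n; simpl; [lra|]. rewrite IHn; lra. Qed.

Lemma fsum_swap n m (f : nat -> nat -> R) :
  fsum n (fun i => fsum m (fun j => f i j)) =
  fsum m (fun j => fsum n (fun i => f i j)).
Proof.
  induction n; simpl.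
  - now rewrite fsum_zero.
  - now rewrite IHn, <- fsum_plus.
Qed.

Lemma fsum_le n f g :
  (forall i, (i < n)%nat -> f i <= g i) -> fsum n f <= fsum n g.
Proof.
  induction n; simpl; intros H; [lra|].
  assert (f n <= g n) by (apply H; lia).
  assert (fsum n f <= fsum n g) by (apply IHn; intros; apply H; lia).
  lra.
Qed.

Lemma fsum_nonneg n f : (forall i, (i < n)%nat -> 0 <= f i) -> 0 <= fsum n f.
Proof. intros H. rewrite <- (fsum_zero n). now apply fsum_le. Qed.

Lemma fsum_abs n f : Rabs (fsum n f) <= fsum n (fun i => Rabs (f i)).
Proof.
  induction n; simpl.
  - rewrite Rabs_R0; lra.
  - eapply Rle_trans; [apply Rabs_triang | lra].
Qed.

Lemma fsum_term_le n f k :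
  (forall i, (i < n)%nat -> 0 <= f i) -> (k < n)%nat -> f k <= fsum n f.
Proof.
  induction n; simpl; intros H Hk; [lia|].
  assert (0 <= fsum n f) by (apply fsum_nonneg; intros; apply H; lia).
  destruct (Nat.eq_dec k n) as [->|Hkn]; [lra|].
  assert (f k <= fsum n f) by (apply IHn; [intros; apply H|]; lia).
  assert (0 <= f n) by (apply H; lia).
  lra.
Qed.

Lemma fsum_indicator n (f : nat -> R) u :
  (u < n)%nat -> fsum n (fun w => if Nat.eqb w u then f w else 0) = f u.
Proof.
  induction n; simpl; intros Hu; [lia|].
  destruct (Nat.eq_dec u n) as [->|Hun].
  - rewrite Nat.eqb_refl, (fsum_ext n _ (fun _ => 0)), fsum_zero; [ring|].
    intros i Hi; destruct (Nat.eqb_spec i n); [lia | reflexivity].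
  - rewrite IHn by lia. destruct (Nat.eqb_spec n u); [lia | ring].
Qed.

Lemma fsum_derive n (f f' : nat -> R -> R) s :
  (forall i, (i < n)%nat -> derivable_pt_lim (f i) s (f' i s)) ->
  derivable_pt_lim (fun r => fsum n (fun i => f i r)) s (fsum n (fun i => f' i s)).
Proof.
  induction n; simpl; intros H.
  - apply derivable_pt_lim_const.
  - apply (derivable_pt_lim_plus (fun r => fsum n (fun i => f i r)) (f n));
      [apply IHn; intros |]; apply H; lia.
Qed.

Lemma fsum_merge n x y (g h : nat -> R) :
  (x < n)%nat -> (y < n)%nat -> x <> y ->
  (forall u, (u < n)%nat -> u <> x -> u <> y -> h u = g u) ->
  h x = 0 -> h y = 0 ->
  fsum (S n) h = fsum n g - g x - g y + h n.
Proof.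
  intros Hx Hy Hxy Hother Hhx Hhy. simpl.
  rewrite (fsum_ext n h (fun u => g u
     - (if Nat.eqb u x then g u else 0) - (if Nat.eqb u y then g u else 0))).
  - rewrite !fsum_minus, !fsum_indicator by assumption. ring.
  - intros u Hu.
    destruct (Nat.eqb_spec u x), (Nat.eqb_spec u y); subst; try lia.
    + rewrite Hhx; ring.
    + rewrite Hhy; ring.
    + rewrite Hother by assumption; ring.
Qed.

Definition quad_form {T : Type} (K : T -> T -> R) (N : nat) (a : nat -> R)
  (t : nat -> T) : R :=
  fsum N (fun i => fsum N (fun j => a i * a j * K (t i) (t j))).

Lemma quad_form_ext {T T' : Type} (K : T -> T -> R) (K' : T' -> T' -> R) N a a' t t' :
  (forall i j, (i < N)%nat -> (j < N)%nat ->
     a i * a j * K (t i) (t j) = a' i * a' j * K' (t' i) (t' j)) ->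
  quad_form K N a t = quad_form K' N a' t'.
Proof.
  intros H. apply fsum_ext; intros i Hi; apply fsum_ext; intros j Hj; auto.
Qed.

Lemma quad_form_opp {T : Type} (K : T -> T -> R) N a t :
  quad_form (fun u v => - K u v) N a t = - quad_form K N a t.
Proof.
  unfold quad_form. rewrite <- fsum_opp.
  apply fsum_ext; intros i _. rewrite <- fsum_opp.
  apply fsum_ext; intros j _. ring.
Qed.

Lemma quad_form_rank1 {T : Type} N a (t : nat -> T) C (f : T -> R) :
  quad_form (fun u v => C * (f u * f v)) N a t =
  C * (fsum N (fun i => a i * f (t i))) ^ 2.
Proof.
  unfold quad_form.
  transitivity (fsum N (fun i =>
    C * (a i * f (t i)) * fsum N (fun j => a j * f (t j)))).
  - apply fsum_ext; intros i _. rewrite <- fsum_scal.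
    apply fsum_ext; intros j _. ring.
  - rewrite (fsum_ext N _ (fun i => fsum N (fun j => a j * f (t j)) * (C * (a i * f (t i)))))
      by (intros; ring).
    rewrite !fsum_scal. ring.
Qed.

Lemma quad_form_abs_le {T : Type} (K : T -> T -> R) N a t c (g : T -> R) :
  0 <= c -> (forall i, (i < N)%nat -> 0 <= g (t i)) ->
  (forall i j, (i < N)%nat -> (j < N)%nat ->
     Rabs (K (t i) (t j)) <= c * (g (t i) * g (t j))) ->
  Rabs (quad_form K N a t) <= c * (fsum N (fun i => Rabs (a i) * g (t i))) ^ 2.
Proof.
  intros Hc Hg HK.
  rewrite <- quad_form_rank1.
  eapply Rle_trans; [apply fsum_abs|].
  apply fsum_le; intros i Hi.
  eapply Rle_trans; [apply fsum_abs|].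
  apply fsum_le; intros j Hj.
  rewrite !Rabs_mult.
  specialize (HK i j Hi Hj).
  assert (0 <= Rabs (a i) * Rabs (a j)) by (apply Rmult_le_pos; apply Rabs_pos).
  nra.
Qed.

Lemma quad_form_derive {T : Type} (K K' : R -> T -> T -> R) N a t s :
  (forall i j, (i < N)%nat -> (j < N)%nat ->
     derivable_pt_lim (fun r => K r (t i) (t j)) s (K' s (t i) (t j))) ->
  derivable_pt_lim (fun r => quad_form (K r) N a t) s (quad_form (K' s) N a t).
Proof.
  intros H.
  apply (fsum_derive N (fun i r => fsum N (fun j => a i * a j * K r (t i) (t j)))
           (fun i s => fsum N (fun j => a i * a j * K' s (t i) (t j)))).
  intros i Hi.
  apply (fsum_derive N (fun j r => a i * a j * K r (t i) (t j))
           (fun j s => a i * a j * K' s (t i) (t j))).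
  intros j Hj. apply derivable_pt_lim_scal. auto.
Qed.

Lemma Rle_0_of_forall_ge_neg_div X B :
  0 <= B -> (forall r, 0 < r -> - (B / r) <= X) -> 0 <= X.
Proof.
  intros HB H. destruct (Rle_lt_dec 0 X) as [|HX]; auto.
  specialize (H ((B + 1) / - X) ltac:(apply Rdiv_lt_0_compat; lra)).
  replace (B / ((B + 1) / - X)) with (- X * (B / (B + 1))) in H
    by (field; lra).
  assert (B / (B + 1) < 1)
    by (apply Rmult_lt_reg_r with (B + 1);
        [lra | unfold Rdiv; rewrite Rmult_assoc, Rinv_l; lra]).
  nra.
Qed.

Lemma nonneg_of_nonincreasing_decay (F F' : R -> R) B :
  (forall s, 0 <= s -> derivable_pt_lim F s (F' s)) ->
  (forall s, 0 < s -> F' s <= 0) ->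
  (forall r, 0 < r -> Rabs (F r) <= B / r) ->
  0 <= F 0.
Proof.
  intros HF HF' Hdecay.
  assert (HB : 0 <= B).
  { specialize (Hdecay 1 Rlt_0_1). rewrite Rdiv_1_r in Hdecay.
    pose proof (Rabs_pos (F 1)); lra. }
  apply (Rle_0_of_forall_ge_neg_div _ B HB). intros r Hr.
  destruct (MVT_cor2 F F' 0 r Hr) as [c [Hmvt Hc]].
  { intros c Hc. apply HF. lra. }
  pose proof (HF' c (proj1 Hc)).
  pose proof (proj1 (Rabs_le_between _ _) (Hdecay r Hr)).
  nra.
Qed.

(** [kM s] is the kernel [M_s]; [kM_tail s r a b] is
    [s int_r^oo e^(-rho s) (1 - e^(-rho a)) (1 - e^(-rho b)) d rho]. *)
Definition kM (s a b : R) : R := a / (s + a) + b / (s + b) - (a + b) / (s + a + b).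

Definition kM_tail (s r a b : R) : R :=
  s * (exp (- (r * s)) / s - exp (- (r * (s + a))) / (s + a)
       - exp (- (r * (s + b))) / (s + b) + exp (- (r * (s + a + b))) / (s + a + b)).

Lemma kM_tail_0 s a b :
  0 < s -> 0 <= a -> 0 <= b -> kM_tail s 0 a b = kM s a b.
Proof.
  intros. unfold kM_tail, kM.
  rewrite !Rmult_0_l, Ropp_0, exp_0. field. repeat split; lra.
Qed.

Lemma kM_tail_derive s r a b :
  0 < s -> 0 <= a -> 0 <= b ->
  derivable_pt_lim (fun r => kM_tail s r a b) r
    (- s * exp (- (r * s)) * ((1 - exp (- (r * a))) * (1 - exp (- (r * b))))).
Proof.
  intros. apply is_derive_Reals. unfold kM_tail.
  auto_derive; [repeat split; lra|].
  replace (- (r * (s + a))) with (- (r * s) + - (r * a)) by ring.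
  replace (- (r * (s + b))) with (- (r * s) + - (r * b)) by ring.
  replace (- (r * (s + a + b))) with (- (r * s) + - (r * a) + - (r * b)) by ring.
  rewrite !exp_plus. field. repeat split; lra.
Qed.

Lemma exp_neg_le_inv x : 0 < x -> exp (- x) <= / x.
Proof.
  intros. rewrite exp_Ropp. apply Rinv_le_contravar; [lra|].
  assert (1 + x < exp x) by (apply exp_ineq1; lra). lra.
Qed.

Lemma scaled_exp_bound s r c :
  0 < s -> 0 < r -> s <= c -> 0 <= s * exp (- (r * c)) / c <= / (r * s).
Proof.
  intros Hs Hr Hc. pose proof (exp_pos (- (r * c))).
  assert (Hsc : s / c <= 1)
    by (apply Rmult_le_reg_r with c;
        [lra | unfold Rdiv; rewrite Rmult_assoc, Rinv_l; lra]).
  assert (0 <= s / c) by (apply Rdiv_le_0_compat; lra).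
  replace (s * exp (- (r * c)) / c) with (s / c * exp (- (r * c))) by (field; lra).
  split; [apply Rmult_le_pos; lra|].
  apply Rle_trans with (exp (- (r * s))).
  - apply Rle_trans with (exp (- (r * c))); [nra|].
    destruct (Req_dec c s) as [->|]; [lra|].
    left; apply exp_increasing; nra.
  - apply exp_neg_le_inv; nra.
Qed.

Lemma kM_tail_abs_le s r a b :
  0 < s -> 0 < r -> 0 <= a -> 0 <= b ->
  Rabs (kM_tail s r a b) <= 4 / s / r * (1 * 1).
Proof.
  intros. unfold kM_tail.
  pose proof (scaled_exp_bound s r s ltac:(lra) ltac:(lra) ltac:(lra)).
  pose proof (scaled_exp_bound s r (s + a) ltac:(lra) ltac:(lra) ltac:(lra)).
  pose proof (scaled_exp_bound s r (s + b) ltac:(lra) ltac:(lra) ltac:(lra)).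
  pose proof (scaled_exp_bound s r (s + a + b) ltac:(lra) ltac:(lra) ltac:(lra)).
  replace (4 / s / r * (1 * 1)) with (4 * / (r * s)) by (field; lra).
  apply Rabs_le.
  replace (s * (exp (- (r * s)) / s - exp (- (r * (s + a))) / (s + a)
     - exp (- (r * (s + b))) / (s + b) + exp (- (r * (s + a + b))) / (s + a + b)))
    with (s * exp (- (r * s)) / s - s * exp (- (r * (s + a))) / (s + a)
     - s * exp (- (r * (s + b))) / (s + b) + s * exp (- (r * (s + a + b))) / (s + a + b))
    by (field; lra).
  lra.
Qed.

Lemma kM_quad_form_nonneg s N a t :
  0 < s -> (forall i, (i < N)%nat -> 0 <= t i) -> 0 <= quad_form (kM s) N a t.
Proof.
  intros Hs Ht.
  rewrite (quad_form_ext _ (kM_tail s 0) N a a t t)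
    by (intros; rewrite kM_tail_0; auto).
  apply (nonneg_of_nonincreasing_decay
           (fun r => quad_form (kM_tail s r) N a t)
           (fun r => quad_form (fun u v => - s * exp (- (r * s))
                       * ((1 - exp (- (r * u))) * (1 - exp (- (r * v))))) N a t)
           (4 / s * (fsum N (fun i => Rabs (a i) * 1)) ^ 2)).
  - intros r _.
    apply (quad_form_derive (kM_tail s) (fun r u v => - s * exp (- (r * s))
             * ((1 - exp (- (r * u))) * (1 - exp (- (r * v)))))).
    intros; apply kM_tail_derive; auto.
  - intros r _. rewrite quad_form_rank1.
    pose proof (exp_pos (- (r * s))).
    pose proof (pow2_ge_0 (fsum N (fun i => a i * (1 - exp (- (r * t i)))))).
    assert (0 <= s * exp (- (r * s))
              * fsum N (fun i => a i * (1 - exp (- (r * t i)))) ^ 2)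
      by (apply Rmult_le_pos; [apply Rmult_le_pos|]; lra).
    lra.
  - intros r Hr.
    replace (4 / s * fsum N (fun i => Rabs (a i) * 1) ^ 2 / r)
      with (4 / s / r * fsum N (fun i => Rabs (a i) * 1) ^ 2) by (field; lra).
    apply quad_form_abs_le with (g := fun _ => 1).
    + apply Rlt_le, Rdiv_lt_0_compat; [apply Rdiv_lt_0_compat|]; lra.
    + intros; lra.
    + intros; apply kM_tail_abs_le; auto.
Qed.

(** [k_tail s a b = int_s^oo M_sigma(a, b) d sigma]. *)
Definition k_tail (s a b : R) : R :=
  (a + b) * ln (s + a + b) - a * ln (s + a) - b * ln (s + b).

Lemma k_tail_0 a b : 0 < a -> 0 < b -> k_tail 0 a b = kfun a b.
Proof.
  intros. unfold k_tail, kfun, eta.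
  destruct (Req_EM_T a 0), (Req_EM_T b 0), (Req_EM_T (a + b) 0); try lra.
  rewrite !Rplus_0_l. ring.
Qed.

Lemma k_tail_derive s a b :
  0 <= s -> 0 < a -> 0 < b ->
  derivable_pt_lim (fun s => k_tail s a b) s (- kM s a b).
Proof.
  intros. apply is_derive_Reals. unfold k_tail, kM.
  auto_derive; [repeat split; lra|]. field. repeat split; lra.
Qed.

Lemma ln_le_sub_1 x : 0 < x -> ln x <= x - 1.
Proof.
  intros Hx. destruct (Req_dec (ln x) 0) as [H0|H0].
  - assert (x = 1) by (rewrite <- (exp_ln x Hx), H0; apply exp_0).
    subst; rewrite ln_1; lra.
  - pose proof (exp_ineq1 _ H0). rewrite exp_ln in *; lra.
Qed.

Lemma ln_increment_bound R0 u d :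
  0 < R0 -> 0 <= u -> 0 <= d -> 0 <= ln (R0 + u + d) - ln (R0 + u) <= d / R0.
Proof.
  intros. rewrite <- ln_div by lra. split.
  - rewrite <- ln_1. apply ln_le; [lra|].
    apply Rmult_le_reg_r with (R0 + u);
      [lra | unfold Rdiv; rewrite Rmult_assoc, Rinv_l; lra].
  - eapply Rle_trans; [apply ln_le_sub_1, Rdiv_lt_0_compat; lra|].
    replace ((R0 + u + d) / (R0 + u) - 1) with (d / (R0 + u)) by (field; lra).
    apply Rmult_le_compat_l; [lra|]. apply Rinv_le_contravar; lra.
Qed.

Lemma k_tail_abs_le r a b :
  0 < r -> 0 < a -> 0 < b -> Rabs (k_tail r a b) <= 2 / r * (a * b).
Proof.
  intros. unfold k_tail.
  pose proof (ln_increment_bound r a b ltac:(lra) ltac:(lra) ltac:(lra)).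
  pose proof (ln_increment_bound r b a ltac:(lra) ltac:(lra) ltac:(lra)).
  replace (r + b + a) with (r + a + b) in * by ring.
  replace ((a + b) * ln (r + a + b) - a * ln (r + a) - b * ln (r + b))
    with (a * (ln (r + a + b) - ln (r + a)) + b * (ln (r + a + b) - ln (r + b)))
    by ring.
  replace (2 / r * (a * b)) with (a * (b / r) + b * (a / r)) by (field; lra).
  rewrite Rabs_pos_eq by nra. nra.
Qed.

Lemma kfun_quad_form_nonneg_pos N a t :
  (forall i, (i < N)%nat -> 0 < t i) -> 0 <= quad_form kfun N a t.
Proof.
  intros Ht.
  rewrite (quad_form_ext _ (k_tail 0) N a a t t)
    by (intros; rewrite k_tail_0; auto).
  apply (nonneg_of_nonincreasing_decay
           (fun s => quad_form (k_tail s) N a t)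
           (fun s => quad_form (fun u v => - kM s u v) N a t)
           (2 * (fsum N (fun i => Rabs (a i) * t i)) ^ 2)).
  - intros s Hs.
    apply (quad_form_derive k_tail (fun s u v => - kM s u v)).
    intros; apply k_tail_derive; auto.
  - intros s Hs. rewrite quad_form_opp.
    assert (0 <= quad_form (kM s) N a t)
      by (apply kM_quad_form_nonneg; [|intros; apply Rlt_le]; auto).
    lra.
  - intros r Hr.
    replace (2 * fsum N (fun i => Rabs (a i) * t i) ^ 2 / r)
      with (2 / r * fsum N (fun i => Rabs (a i) * t i) ^ 2) by (field; lra).
    apply quad_form_abs_le with (g := fun x => x).
    + apply Rlt_le, Rdiv_lt_0_compat; lra.
    + intros; apply Rlt_le; auto.
    + intros; apply k_tail_abs_le; auto.
Qed.

Lemma eta_0 : eta 0 = 0.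
Proof. unfold eta. destruct (Req_EM_T 0 0); lra. Qed.

Lemma kfun_0l b : kfun 0 b = 0.
Proof. unfold kfun. rewrite Rplus_0_l, eta_0. ring. Qed.

Lemma kfun_0r a : kfun a 0 = 0.
Proof. unfold kfun. rewrite Rplus_0_r, eta_0. ring. Qed.

Lemma kfun_sym a b : kfun a b = kfun b a.
Proof. unfold kfun. rewrite (Rplus_comm b a). ring. Qed.

(** Points at [0] contribute nothing since [k(0, b) = 0]; move them to [1]
    with weight [0]. *)
Lemma kfun_quad_form_nonneg N a t :
  (forall i, (i < N)%nat -> 0 <= t i) -> 0 <= quad_form kfun N a t.
Proof.
  intros Ht.
  set (t' := fun i => if Req_EM_T (t i) 0 then 1 else t i).
  set (a' := fun i => if Req_EM_T (t i) 0 then 0 else a i).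
  rewrite (quad_form_ext kfun kfun N a a' t t').
  - apply kfun_quad_form_nonneg_pos. intros i Hi. unfold t'.
    specialize (Ht i Hi). destruct (Req_EM_T (t i) 0); lra.
  - intros i j _ _. unfold a', t'.
    destruct (Req_EM_T (t i) 0) as [->|]; [rewrite kfun_0l; ring|].
    destruct (Req_EM_T (t j) 0) as [->|]; [rewrite kfun_0r; ring | reflexivity].
Qed.

Lemma K1_pos_def m : pos_def_kernel (in_unit_cube m) (K1 m).
Proof.
  split.
  - intros; apply kfun_sym.
  - intros N a pts Hpts.
    change (0 <= quad_form kfun N a (fun i => fsum m (pts i))).
    apply kfun_quad_form_nonneg. intros i Hi.
    apply fsum_nonneg. intros c Hc. apply (Hpts i Hi c Hc).
Qed.

Lemma K2_pos_def m : pos_def_kernel (in_unit_cube m) (K2 m).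
Proof.
  split.
  - intros; apply fsum_ext; intros; apply kfun_sym.
  - intros N a pts Hpts.
    change (0 <= quad_form (K2 m) N a pts).
    replace (quad_form (K2 m) N a pts)
      with (fsum m (fun c => quad_form kfun N a (fun i => pts i c))).
    + apply fsum_nonneg. intros c Hc.
      apply kfun_quad_form_nonneg. intros i Hi. apply (Hpts i Hi c Hc).
    + unfold quad_form, K2. rewrite fsum_swap.
      apply fsum_ext; intros i _. rewrite fsum_swap.
      apply fsum_ext; intros j _. now rewrite <- fsum_scal.
Qed.

Definition xlnx (u : R) : R := u * ln u.

Lemma eta_xlnx u : eta u = - xlnx u.
Proof. unfold eta, xlnx. destruct (Req_EM_T u 0) as [->|]; ring. Qed.

Lemma xlnx_0 : xlnx 0 = 0.
Proof. unfold xlnx; ring. Qed.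

Lemma kfun_xlnx a b : kfun a b = xlnx (a + b) - xlnx a - xlnx b.
Proof. unfold kfun; rewrite !eta_xlnx; ring. Qed.

Lemma mutual_info_xlnx N M P :
  (forall u c, (u < N)%nat -> (c < M)%nat -> 0 <= P u c) ->
  mutual_info N M P =
  fsum N (fun u => fsum M (fun c => xlnx (P u c)))
  - fsum N (fun u => xlnx (marg1 M P u)) - fsum M (fun c => xlnx (marg2 N P c)).
Proof.
  intros HP. unfold mutual_info.
  rewrite (fsum_ext N _ (fun u => fsum M (fun c => xlnx (P u c))
             - ln (marg1 M P u) * fsum M (fun c => P u c)
             - fsum M (fun c => ln (marg2 N P c) * P u c))).
  - assert (Hrows : fsum N (fun u => ln (marg1 M P u) * fsum M (fun c => P u c))
                    = fsum N (fun u => xlnx (marg1 M P u)))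
      by (apply fsum_ext; intros; unfold xlnx, marg1; ring).
    assert (Hcols : fsum N (fun u => fsum M (fun c => ln (marg2 N P c) * P u c))
                    = fsum M (fun c => xlnx (marg2 N P c))).
    { rewrite fsum_swap. apply fsum_ext; intros c _.
      rewrite fsum_scal. unfold xlnx, marg2; ring. }
    now rewrite !fsum_minus, Hrows, Hcols.
  - intros u Hu. rewrite <- fsum_scal, <- !fsum_minus. apply fsum_ext; intros c Hc.
    destruct (Req_EM_T (P u c) 0) as [->|]; [unfold xlnx; ring|].
    assert (0 < P u c) by (pose proof (HP u c Hu Hc); lra).
    assert (P u c <= marg1 M P u)
      by (apply (fsum_term_le M (fun c => P u c)); auto).
    assert (P u c <= marg2 N P c)
      by (apply (fsum_term_le N (fun u => P u c)); auto).
    rewrite ln_div, ln_mult by (try apply Rmult_lt_0_compat; lra).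
    unfold xlnx; ring.
Qed.

Section Pushforward.

Variables (n : nat) (p : nat -> nat -> R) (x y : nat).
Hypotheses (Hx : (x < n)%nat) (Hy : (y < n)%nat) (Hxy : x <> y).

Lemma pushforward_other u c :
  (u < n)%nat -> u <> x -> u <> y -> pushforward n x y p u c = p u c.
Proof.
  intros Hu Hux Huy. unfold pushforward.
  rewrite <- (fsum_indicator n (fun w => p w c) u Hu).
  apply fsum_ext; intros w Hw. unfold merge_map.
  destruct (Nat.eqb_spec w x), (Nat.eqb_spec w y), (Nat.eqb_spec w u),
    (Nat.eqb_spec n u); reflexivity || lia.
Qed.

Lemma pushforward_merged u c : u = x \/ u = y -> pushforward n x y p u c = 0.
Proof.
  intros Hu. unfold pushforward.
  rewrite (fsum_ext n _ (fun _ => 0)); [apply fsum_zero|].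
  intros w Hw. unfold merge_map.
  destruct (Nat.eqb_spec w x), (Nat.eqb_spec w y), (Nat.eqb_spec n u),
    (Nat.eqb_spec w u); reflexivity || lia.
Qed.

Lemma pushforward_new c : pushforward n x y p n c = p x c + p y c.
Proof.
  unfold pushforward.
  rewrite <- (fsum_indicator n (fun w => p w c) x Hx),
    <- (fsum_indicator n (fun w => p w c) y Hy), <- fsum_plus.
  apply fsum_ext; intros w Hw. unfold merge_map.
  destruct (Nat.eqb_spec w x), (Nat.eqb_spec w y), (Nat.eqb_spec n n),
    (Nat.eqb_spec w n); cbn; try lia; ring.
Qed.

Lemma pushforward_nonneg m :
  (forall u c, (u < n)%nat -> (c < m)%nat -> 0 <= p u c) ->
  forall u c, (u < S n)%nat -> (c < m)%nat -> 0 <= pushforward n x y p u c.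
Proof.
  intros Hp u c Hu Hc.
  destruct (Nat.eq_dec u n) as [->|].
  { rewrite pushforward_new. pose proof (Hp x c Hx Hc).
    pose proof (Hp y c Hy Hc). lra. }
  destruct (Nat.eq_dec u x), (Nat.eq_dec u y);
    try (rewrite pushforward_merged by auto; lra).
  rewrite pushforward_other by (auto; lia). apply Hp; lia.
Qed.

Lemma fsum_rows_pushforward m (G : (nat -> R) -> R) :
  (forall f g, (forall c, (c < m)%nat -> f c = g c) -> G f = G g) ->
  G (fun _ => 0) = 0 ->
  fsum (S n) (fun u => G (pushforward n x y p u)) =
  fsum n (fun u => G (p u)) - G (p x) - G (p y) + G (fun c => p x c + p y c).
Proof.
  intros HG HG0.
  rewrite (fsum_merge n x y (fun u => G (p u))); auto.
  - f_equal. apply HG; intros. apply pushforward_new.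
  - intros u Hu Hux Huy. apply HG; intros. now apply pushforward_other.
  - rewrite <- HG0. apply HG; intros. apply pushforward_merged; auto.
  - rewrite <- HG0. apply HG; intros. apply pushforward_merged; auto.
Qed.

Lemma marg2_pushforward c : marg2 (S n) (pushforward n x y p) c = marg2 n p c.
Proof.
  unfold marg2. rewrite (fsum_merge n x y (fun u => p u c)); auto.
  - rewrite pushforward_new; ring.
  - intros; now apply pushforward_other.
  - apply pushforward_merged; auto.
  - apply pushforward_merged; auto.
Qed.

Lemma MIL_eq_K1_sub_K2 m :
  (forall u c, (u < n)%nat -> (c < m)%nat -> 0 <= p u c) ->
  MIL n m p x y = K1 m (p x) (p y) - K2 m (p x) (p y).
Proof.
  intros Hp. unfold MIL.
  rewrite (mutual_info_xlnx n m p Hp),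
    (mutual_info_xlnx (S n) m _ (pushforward_nonneg m Hp)).
  unfold marg1.
  rewrite (fsum_rows_pushforward m (fun f => fsum m (fun c => xlnx (f c)))),
    (fsum_rows_pushforward m (fun f => xlnx (fsum m (fun c => f c)))).
  - rewrite (fsum_ext m (fun c => xlnx (marg2 (S n) _ c)) (fun c => xlnx (marg2 n p c)))
      by (intros; now rewrite marg2_pushforward).
    unfold K1, K2. rewrite kfun_xlnx.
    change (fsum m (p x)) with (fsum m (fun c => p x c)).
    change (fsum m (p y)) with (fsum m (fun c => p y c)).
    rewrite (fsum_ext m (fun c => kfun (p x c) (p y c))
               (fun c => xlnx (p x c + p y c) - xlnx (p x c) - xlnx (p y c)))
      by (intros; apply kfun_xlnx).
    rewrite !fsum_minus, (fsum_plus m (fun c => p x c) (fun c => p y c)). ring.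
  - intros f g Hfg. f_equal. now apply fsum_ext.
  - now rewrite fsum_zero, xlnx_0.
  - intros f g Hfg. apply fsum_ext; intros. now rewrite Hfg.
  - rewrite (fsum_ext m _ (fun _ => 0)); [apply fsum_zero | intros; apply xlnx_0].
Qed.

End Pushforward.

Theorem theorem4 :
  (forall (n m : nat) (p : nat -> nat -> R) (x y : nat),
     is_joint_pmf n m p -> (x < n)%nat -> (y < n)%nat -> x <> y ->
     MIL n m p x y = K1 m (p x) (p y) - K2 m (p x) (p y)) /\
  (forall m : nat,
     pos_def_kernel (in_unit_cube m) (K1 m) /\
     pos_def_kernel (in_unit_cube m) (K2 m) /\
     krein_kernel (in_unit_cube m) (fun u v => K1 m u v - K2 m u v)).
Proof.
  split.
  - intros n m p x y [Hp _] Hx Hy Hxy. now apply MIL_eq_K1_sub_K2.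
  - intros m.
    pose proof (K1_pos_def m) as HK1. pose proof (K2_pos_def m) as HK2.
    split; [exact HK1 | split; [exact HK2 |]].
    exists (K1 m), (K2 m). auto.
Qed.
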